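(* The theory $\mathsf{Seq}$ is $\Sigma$-complete: for every $\Sigma$-sentence $\phi$ of $\mathcal{L}$, if $\mathfrak{S}\models\phi$ then $\mathsf{Seq}\vdash\phi$.
   Context: $\mathcal{L}=\{e,\vdash,\circ\}$ with $e$ a constant and $\vdash$ (infix), $\circ$ binary function symbols. $\mathsf{Seq}$ has axioms: ($\mathsf{Seq}_1$) $\forall xy[x\vdash y\neq e]$; ($\mathsf{Seq}_2$) $\forall x_1x_2y_1y_2[x_1\vdash x_2=y_1\vdash y_2\rightarrow(x_1=y_1\wedge x_2=y_2)]$; ($\mathsf{Seq}_3$) $\forall x[x\circ e=x]$; ($\mathsf{Seq}_4$) $\forall xyz[x\circ(y\vdash z)=(x\circ y)\vdash z]$; ($\mathsf{Seq}_5$) $\forall x[x=e\vee\exists yz[x=y\vdash z]]$. Sequences: $()$ is a sequence and $(s_1,\ldots,s_n)$ ($n>0$) is a sequence whenever the $s_i$ are. The standard structure $\mathfrak{S}$ has universe all sequences, $e^{\mathfrak{S}}=()$, $(s_1,\ldots,s_n)\vdash^{\mathfrak{S}}t=(s_1,\ldots,s_n,t)$, $\circ^{\mathfrak{S}}$ concatenation. $s\sqsubseteq t$ abbreviates $\exists y[s\circ y=t]$, and $\forall x\sqsubseteq t[\phi]$ abbreviates $\forall x[x\sqsubseteq t\rightarrow\phi]$. $\Sigma$-formulas are defined inductively: atomic formulas and their negations; $s\sqsubseteq t$ and $\neg(s\sqsubseteq t)$ for terms $s,t$; conjunctions and disjunctions of $\Sigma$-formulas; $\exists x[\phi]$ for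 $\Sigma$-formulas $\phi$; $\forall x\sqsubseteq t[\phi]$ for $\Sigma$-formulas $\phi$ and terms $t$ not containing $x$. *)

From Stdlib Require Import List Arith.
Import ListNotations.

Inductive term : Type :=
| var : nat -> term
| te : term
| tturn : term -> term -> term
| tconc : term -> term -> term.

Inductive form : Type :=
| Fal : form
| Eq : term -> term -> form
| Imp : form -> form -> form
| And : form -> form -> form
| Or : form -> form -> form
| All : form -> form
| Ex : form -> form.

Definition Neg (phi : form) : form := Imp phi Fal.

Definition scons {X : Type} (x : X) (f : nat -> X) (n : nat) : X :=
  match n with 0 => x | S k => f k end.

Fixpoint subst_term (sigma : nat -> term) (t : term) : term :=
  match t with
  | var n => sigma n
  | te => te
  | tturn a b => tturn (subst_term sigma a) (subst_term sigma b)
  | tconc a b => tconc (subst_term sigma a) (subst_term sigma b)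
  end.

Definition up (sigma : nat -> term) : nat -> term :=
  scons (var 0) (fun n => subst_term (fun k => var (S k)) (sigma n)).

Fixpoint subst_form (sigma : nat -> term) (phi : form) : form :=
  match phi with
  | Fal => Fal
  | Eq s t => Eq (subst_term sigma s) (subst_term sigma t)
  | Imp a b => Imp (subst_form sigma a) (subst_form sigma b)
  | And a b => And (subst_form sigma a) (subst_form sigma b)
  | Or a b => Or (subst_form sigma a) (subst_form sigma b)
  | All a => All (subst_form (up sigma) a)
  | Ex a => Ex (subst_form (up sigma) a)
  end.

Definition shift_t (t : term) : term := subst_term (fun n => var (S n)) t.
Definition shift_f (phi : form) : form := subst_form (fun n => var (S n)) phi.

Definition inst (t : term) (phi : form) : form := subst_form (scons t var) phi.

Fixpoint bounded_t (n : nat) (t : term) : Prop :=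
  match t with
  | var k => k < n
  | te => True
  | tturn a b => bounded_t n a /\ bounded_t n b
  | tconc a b => bounded_t n a /\ bounded_t n b
  end.

Fixpoint bounded (n : nat) (phi : form) : Prop :=
  match phi with
  | Fal => True
  | Eq s t => bounded_t n s /\ bounded_t n t
  | Imp a b => bounded n a /\ bounded n b
  | And a b => bounded n a /\ bounded n b
  | Or a b => bounded n a /\ bounded n b
  | All a => bounded (S n) a
  | Ex a => bounded (S n) a
  end.

Definition sentence (phi : form) : Prop := bounded 0 phi.

Inductive nd : list form -> form -> Prop :=
| ndA G phi : In phi G -> nd G phi
| ndExp G phi : nd G Fal -> nd G phi
| ndDN G phi : nd G (Neg (Neg phi)) -> nd G phi
| ndII G phi psi : nd (phi :: G) psi -> nd G (Imp phi psi)
| ndIE G phi psi : nd G (Imp phi psi) -> nd G phi -> nd G psi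
| ndCI G phi psi : nd G phi -> nd G psi -> nd G (And phi psi)
| ndCE1 G phi psi : nd G (And phi psi) -> nd G phi
| ndCE2 G phi psi : nd G (And phi psi) -> nd G psi
| ndDI1 G phi psi : nd G phi -> nd G (Or phi psi)
| ndDI2 G phi psi : nd G psi -> nd G (Or phi psi)
| ndDE G phi psi th :
    nd G (Or phi psi) -> nd (phi :: G) th -> nd (psi :: G) th -> nd G th
| ndAllI G phi : nd (map shift_f G) phi -> nd G (All phi)
| ndAllE G phi t : nd G (All phi) -> nd G (inst t phi)
| ndExI G phi t : nd G (inst t phi) -> nd G (Ex phi)
| ndExE G phi psi :
    nd G (Ex phi) -> nd (phi :: map shift_f G) (shift_f psi) -> nd G psi
| ndRefl G t : nd G (Eq t t)
| ndLeib G phi s t : nd G (Eq s t) -> nd G (inst s phi) -> nd G (inst t phi).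

Definition v := var.
(* Seq1: forall x y, x |- y <> e *)
Definition Seq1 : form := All (All (Neg (Eq (tturn (v 1) (v 0)) te))).
(* Seq2: forall x1 x2 y1 y2, x1|-x2 = y1|-y2 -> x1=y1 /\ x2=y2 *)
Definition Seq2 : form :=
  All (All (All (All
    (Imp (Eq (tturn (v 3) (v 2)) (tturn (v 1) (v 0)))
         (And (Eq (v 3) (v 1)) (Eq (v 2) (v 0))))))).
(* Seq3: forall x, x o e = x *)
Definition Seq3 : form := All (Eq (tconc (v 0) te) (v 0)).
(* Seq4: forall x y z, x o (y |- z) = (x o y) |- z *)
Definition Seq4 : form :=
  All (All (All (Eq (tconc (v 2) (tturn (v 1) (v 0)))
                    (tturn (tconc (v 2) (v 1)) (v 0))))).
(* Seq5: forall x, x = e \/ exists y z, x = y |- z *)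
Definition Seq5 : form :=
  All (Or (Eq (v 0) te) (Ex (Ex (Eq (v 2) (tturn (v 1) (v 0)))))).

Definition Seq_axiom (phi : form) : Prop :=
  phi = Seq1 \/ phi = Seq2 \/ phi = Seq3 \/ phi = Seq4 \/ phi = Seq5.

Definition Seq_proves (phi : form) : Prop :=
  exists G, (forall psi, In psi G -> Seq_axiom psi) /\ nd G phi.

(* s [= t  abbreviates  exists y [ s o y = t ] *)
Definition sqsub (s t : term) : form :=
  Ex (Eq (tconc (shift_t s) (var 0)) (shift_t t)).
(* forall x [= t [phi]  abbreviates  forall x [ x [= t -> phi ];
   in de Bruijn form t is shifted, so x (index 0) does not occur in t *)
Definition ball (t : term) (phi : form) : form :=
  All (Imp (sqsub (var 0) (shift_t t)) phi).

Inductive Sigma : form -> Prop :=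
| Sig_eq s t : Sigma (Eq s t)
| Sig_neq s t : Sigma (Neg (Eq s t))
| Sig_sub s t : Sigma (sqsub s t)
| Sig_nsub s t : Sigma (Neg (sqsub s t))
| Sig_and phi psi : Sigma phi -> Sigma psi -> Sigma (And phi psi)
| Sig_or phi psi : Sigma phi -> Sigma psi -> Sigma (Or phi psi)
| Sig_ex phi : Sigma phi -> Sigma (Ex phi)
| Sig_ball t phi : Sigma phi -> Sigma (ball t phi).

Inductive sq : Type := Sq : list sq -> sq.

Definition sq_e : sq := Sq [].
Definition sq_turn (a b : sq) : sq :=
  match a with Sq l => Sq (l ++ [b]) end.
Definition sq_conc (a b : sq) : sq :=
  match a, b with Sq l, Sq l' => Sq (l ++ l') end.

Fixpoint eval (rho : nat -> sq) (t : term) : sq :=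
  match t with
  | var n => rho n
  | te => sq_e
  | tturn a b => sq_turn (eval rho a) (eval rho b)
  | tconc a b => sq_conc (eval rho a) (eval rho b)
  end.

Fixpoint sat (rho : nat -> sq) (phi : form) : Prop :=
  match phi with
  | Fal => False
  | Eq s t => eval rho s = eval rho t
  | Imp a b => sat rho a -> sat rho b
  | And a b => sat rho a /\ sat rho b
  | Or a b => sat rho a \/ sat rho b
  | All a => forall x : sq, sat (scons x rho) a
  | Ex a => exists x : sq, sat (scons x rho) a
  end.

(* S |= phi (for a sentence the environment is irrelevant) *)
Definition S_models (phi : form) : Prop := forall rho, sat rho phi.

(* Every true Sigma-sentence is proved through numerals.  By Seq3 and Seq4 each
   closed term provably equals the numeral of its value, and by Seq1 and Seq2
   distinct numerals are provably distinct.  The bounded quantifier is the heart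
   of the matter: splitting the witness y of  x o y = b |- c  with Seq5 shows that
   Seq proves  x [= b |- c  ->  x = b |- c \/ x [= b,  so  x [= num b  forces x to
   be one of the finitely many numerals of prefixes of b, and  forall x [= t [phi]
   reduces to finitely many true instances.  Induction on Sigma-formulas, with
   numerals substituted for the free variables, then proves every true instance. *)

From Stdlib Require Import List Lia Classical.
Import ListNotations.

Lemma subst_term_ext sigma tau t :
  (forall n, sigma n = tau n) -> subst_term sigma t = subst_term tau t.
Proof. intros H; induction t; cbn; congruence. Qed.

Lemma up_ext sigma tau : (forall n, sigma n = tau n) -> forall n, up sigma n = up tau n.
Proof. intros H [|n]; cbn; [reflexivity | now rewrite H]. Qed.

Lemma subst_form_ext phi : forall sigma tau,
  (forall n, sigma n = tau n) -> subst_form sigma phi = subst_form tau phi.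
Proof.
  induction phi; intros sigma tau H; cbn; f_equal;
    auto using subst_term_ext, up_ext.
Qed.

Lemma subst_term_comp sigma tau t :
  subst_term tau (subst_term sigma t) = subst_term (fun n => subst_term tau (sigma n)) t.
Proof. induction t; cbn; congruence. Qed.

Lemma subst_term_id sigma t : (forall n, sigma n = var n) -> subst_term sigma t = t.
Proof. intros H; induction t; cbn; congruence. Qed.

Lemma up_comp sigma tau n :
  subst_term (up tau) (up sigma n) = up (fun k => subst_term tau (sigma k)) n.
Proof.
  destruct n; cbn; [reflexivity|].
  rewrite !subst_term_comp. now apply subst_term_ext.
Qed.

Lemma subst_form_comp phi : forall sigma tau,
  subst_form tau (subst_form sigma phi)
  = subst_form (fun n => subst_term tau (sigma n)) phi.
Proof.
  induction phi; intros sigma tau; cbn; f_equal; auto using subst_term_comp;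
    rewrite IHphi; apply subst_form_ext, up_comp.
Qed.

Lemma inst_shift_t u t : subst_term (scons u var) (shift_t t) = t.
Proof. unfold shift_t. rewrite subst_term_comp. now apply subst_term_id. Qed.

Lemma up_shift_t sigma t : subst_term (up sigma) (shift_t t) = shift_t (subst_term sigma t).
Proof. unfold shift_t. rewrite !subst_term_comp. now apply subst_term_ext. Qed.

Lemma inst_up t sigma phi : inst t (subst_form (up sigma) phi) = subst_form (scons t sigma) phi.
Proof.
  unfold inst. rewrite subst_form_comp. apply subst_form_ext.
  intros [|n]; [reflexivity | apply inst_shift_t].
Qed.

Lemma subst_sqsub sigma s t :
  subst_form sigma (sqsub s t) = sqsub (subst_term sigma s) (subst_term sigma t).
Proof. unfold sqsub; cbn. now rewrite !up_shift_t. Qed.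

Lemma subst_ball sigma t phi :
  subst_form sigma (ball t phi) = ball (subst_term sigma t) (subst_form (up sigma) phi).
Proof. unfold ball; cbn [subst_form]. now rewrite subst_sqsub, up_shift_t. Qed.

Lemma inst_sqsub u t : inst u (sqsub (var 0) (shift_t t)) = sqsub u t.
Proof. unfold inst. now rewrite subst_sqsub, inst_shift_t. Qed.

Lemma bounded_t_subst n sigma t :
  bounded_t n t -> (forall k, k < n -> sigma k = var k) -> subst_term sigma t = t.
Proof. intros Hb H; induction t; cbn in *; f_equal; intuition. Qed.

Lemma bounded_subst phi : forall n sigma,
  bounded n phi -> (forall k, k < n -> sigma k = var k) -> subst_form sigma phi = phi.
Proof.
  induction phi; intros n sigma Hb H; cbn in *; f_equal;
    try (eapply bounded_t_subst; eauto; tauto);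
    try (eapply IHphi1; eauto; tauto); try (eapply IHphi2; eauto; tauto);
    try reflexivity.
  all: apply (IHphi (S n)); [assumption|].
  all: intros [|k] Hk; cbn; [reflexivity | rewrite H by lia; reflexivity].
Qed.

Lemma sentence_subst sigma phi : sentence phi -> subst_form sigma phi = phi.
Proof. intros H. apply (bounded_subst phi 0); [exact H | lia]. Qed.

Definition sq_prefix (a b : sq) : Prop := exists y, sq_conc a y = b.

Lemma eval_subst rho sigma t :
  eval rho (subst_term sigma t) = eval (fun n => eval rho (sigma n)) t.
Proof. induction t; cbn; congruence. Qed.

Lemma eval_shift x rho t : eval (scons x rho) (shift_t t) = eval rho t.
Proof. unfold shift_t. now rewrite eval_subst. Qed.

Lemma sat_sqsub rho s t : sat rho (sqsub s t) <-> sq_prefix (eval rho s) (eval rho t).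
Proof. unfold sqsub; cbn -[shift_t]. now setoid_rewrite eval_shift. Qed.

Fixpoint sq_nested_ind (P : sq -> Prop) (H : forall l, Forall P l -> P (Sq l)) (s : sq) : P s :=
  match s with
  | Sq l => H l ((fix all (l : list sq) : Forall P l :=
                    match l with
                    | [] => Forall_nil P
                    | x :: l' => Forall_cons x (sq_nested_ind P H x) (all l')
                    end) l)
  end.

Lemma snoc_cases {A} (l : list A) : l = [] \/ exists l' c, l = l' ++ [c].
Proof. destruct l using rev_ind; [left; reflexivity | right; eauto]. Qed.

Fixpoint num (s : sq) : term :=
  match s with Sq l => fold_left (fun acc x => tturn acc (num x)) l te end.

Definition numl (l : list sq) : term := num (Sq l).

Lemma numl_snoc l c : numl (l ++ [c]) = tturn (numl l) (num c).
Proof. unfold numl; cbn. now rewrite fold_left_app. Qed.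

Lemma subst_num sigma s : subst_term sigma (num s) = num s.
Proof.
  induction s as [l Hl] using sq_nested_ind. fold (numl l).
  induction l as [|c l IH] using rev_ind; [reflexivity|].
  apply Forall_app in Hl as [Hl Hc]. inversion_clear Hc as [| ? ? Hc' _].
  rewrite numl_snoc; cbn [subst_term]. now rewrite IH, Hc'.
Qed.

Lemma nd_weaken G phi : nd G phi -> forall G', incl G G' -> nd G' phi.
Proof.
  induction 1; intros G' Hi.
  - now apply ndA, Hi.
  - now apply ndExp, IHnd.
  - now apply ndDN, IHnd.
  - apply ndII, IHnd, incl_cons; [left; reflexivity | now apply incl_tl].
  - eapply ndIE; eauto.
  - apply ndCI; auto.
  - eapply ndCE1; eauto.
  - eapply ndCE2; eauto.
  - apply ndDI1; auto.
  - apply ndDI2; auto.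
  - eapply ndDE; [eauto | apply IHnd2 | apply IHnd3];
      (apply incl_cons; [left; reflexivity | now apply incl_tl]).
  - apply ndAllI, IHnd, incl_map, Hi.
  - apply ndAllE; auto.
  - eapply ndExI; eauto.
  - eapply ndExE; [eauto | apply IHnd2].
    apply incl_cons; [left; reflexivity | apply incl_tl, incl_map, Hi].
  - apply ndRefl.
  - eapply ndLeib; eauto.
Qed.

Lemma nd_conv G phi psi : nd G phi -> phi = psi -> nd G psi.
Proof. now intros H <-. Qed.

Lemma nd_hyp G phi : nd (phi :: G) phi.
Proof. apply ndA; left; reflexivity. Qed.

Ltac inst_simpl H :=
  unfold inst in H; cbn [subst_form subst_term scons] in H; rewrite ?inst_shift_t in H.

Lemma nd_eq_sym G s t : nd G (Eq s t) -> nd G (Eq t s).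
Proof.
  intros H. pose proof (ndLeib G (Eq (var 0) (shift_t s)) s t H) as L.
  inst_simpl L. exact (L (ndRefl G s)).
Qed.

Lemma nd_eq_trans G s t u : nd G (Eq s t) -> nd G (Eq t u) -> nd G (Eq s u).
Proof.
  intros H1 H2. pose proof (ndLeib G (Eq (shift_t s) (var 0)) t u H2) as L.
  inst_simpl L. exact (L H1).
Qed.

Lemma nd_eq_cong G s t c : nd G (Eq s t) ->
  nd G (Eq (subst_term (scons s var) c) (subst_term (scons t var) c)).
Proof.
  intros H. pose proof (ndLeib G (Eq (shift_t (subst_term (scons s var) c)) c) s t H) as L.
  inst_simpl L. exact (L (ndRefl G _)).
Qed.

Lemma nd_cong_turn G a a' b b' :
  nd G (Eq a a') -> nd G (Eq b b') -> nd G (Eq (tturn a b) (tturn a' b')).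
Proof.
  intros Ha Hb.
  pose proof (nd_eq_cong G a a' (tturn (var 0) (shift_t b)) Ha) as La.
  pose proof (nd_eq_cong G b b' (tturn (shift_t a') (var 0)) Hb) as Lb.
  cbn [subst_term scons] in La, Lb. rewrite !inst_shift_t in La, Lb.
  exact (nd_eq_trans _ _ _ _ La Lb).
Qed.

Lemma nd_cong_conc G a a' b b' :
  nd G (Eq a a') -> nd G (Eq b b') -> nd G (Eq (tconc a b) (tconc a' b')).
Proof.
  intros Ha Hb.
  pose proof (nd_eq_cong G a a' (tconc (var 0) (shift_t b)) Ha) as La.
  pose proof (nd_eq_cong G b b' (tconc (shift_t a') (var 0)) Hb) as Lb.
  cbn [subst_term scons] in La, Lb. rewrite !inst_shift_t in La, Lb.
  exact (nd_eq_trans _ _ _ _ La Lb).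
Qed.

Lemma nd_sqsub_intro G s t u : nd G (Eq (tconc s u) t) -> nd G (sqsub s t).
Proof.
  intros H. apply ndExI with (t := u).
  apply (nd_conv _ _ _ H). unfold inst; cbn. now rewrite !inst_shift_t.
Qed.

Lemma nd_sqsub_transfer G s s' t t' :
  nd G (Eq s s') -> nd G (Eq t t') -> nd G (sqsub s t) -> nd G (sqsub s' t').
Proof.
  intros Hs Ht H.
  pose proof (ndLeib _ (sqsub (var 0) (shift_t t)) _ _ Hs) as Hs'.
  rewrite !inst_sqsub in Hs'. specialize (Hs' H).
  pose proof (ndLeib _ (sqsub (shift_t s') (var 0)) _ _ Ht) as Ht'.
  unfold inst in Ht'. rewrite !subst_sqsub, !inst_shift_t in Ht'. exact (Ht' Hs').
Qed.

Definition Seq_ctx (G : list form) : Prop := forall psi, Seq_axiom psi -> In psi G.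

Lemma Seq_ctx_axioms : Seq_ctx [Seq1; Seq2; Seq3; Seq4; Seq5].
Proof. intros psi [->|[->|[->|[->| ->]]]]; cbn; tauto. Qed.

Lemma Seq_ctx_cons G phi : Seq_ctx G -> Seq_ctx (phi :: G).
Proof. intros H psi Hpsi; right; auto. Qed.

Lemma Seq_ctx_shift G : Seq_ctx G -> Seq_ctx (map shift_f G).
Proof.
  intros H psi Hpsi.
  replace psi with (shift_f psi) by (destruct Hpsi as [->|[->|[->|[->| ->]]]]; reflexivity).
  now apply in_map, H.
Qed.

Ltac inst_axiom :=
  unfold inst, shift_t, v; cbn [subst_form subst_term up scons]; repeat rewrite subst_term_comp;
  repeat match goal with |- context [subst_term ?s ?t] =>
    rewrite (subst_term_id s t) by (intro; reflexivity) end.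

Section SeqAxioms.

Variable G : list form.
Hypothesis HG : Seq_ctx G.

Lemma nd_Seq_axiom psi : Seq_axiom psi -> nd G psi.
Proof. intros H; exact (ndA _ _ (HG psi H)). Qed.

Lemma nd_turn_neq_e a b : nd G (Eq (tturn a b) te) -> nd G Fal.
Proof.
  apply ndIE.
  apply (nd_conv _ _ _ (ndAllE _ _ b (ndAllE _ _ a (nd_Seq_axiom Seq1 ltac:(red; tauto))))).
  now inst_axiom.
Qed.

Lemma nd_turn_inj a b c d :
  nd G (Eq (tturn a b) (tturn c d)) -> nd G (Eq a c) /\ nd G (Eq b d).
Proof.
  intros H.
  assert (Hac_bd : nd G (And (Eq a c) (Eq b d))).
  { refine (ndIE _ _ _ _ H).
    apply (nd_conv _ _ _ (ndAllE _ _ d (ndAllE _ _ c (ndAllE _ _ b (ndAllE _ _ a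
             (nd_Seq_axiom Seq2 ltac:(red; tauto))))))).
    now inst_axiom. }
  split; [eapply ndCE1 | eapply ndCE2]; exact Hac_bd.
Qed.

Lemma nd_conc_e a : nd G (Eq (tconc a te) a).
Proof. exact (ndAllE _ _ a (nd_Seq_axiom Seq3 ltac:(red; tauto))). Qed.

Lemma nd_conc_turn a b c : nd G (Eq (tconc a (tturn b c)) (tturn (tconc a b) c)).
Proof.
  apply (nd_conv _ _ _ (ndAllE _ _ c (ndAllE _ _ b (ndAllE _ _ a
           (nd_Seq_axiom Seq4 ltac:(red; tauto)))))).
  now inst_axiom.
Qed.

Lemma nd_Seq_cases x psi :
  nd (Eq x te :: G) psi ->
  nd (Eq (shift_t (shift_t x)) (tturn (var 1) (var 0)) :: map shift_f (map shift_f G))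
     (shift_f (shift_f psi)) ->
  nd G psi.
Proof.
  intros He Hturn.
  eapply ndDE; [exact (ndAllE _ _ x (nd_Seq_axiom Seq5 ltac:(red; tauto))) | exact He |].
  eapply ndExE; [apply nd_hyp |]. eapply ndExE; [apply nd_hyp |].
  apply (nd_weaken _ _ Hturn), incl_cons; [left; reflexivity |].
  apply incl_tl, incl_map, incl_tl, incl_map, incl_tl, incl_refl.
Qed.

Lemma nd_conc_eq_e s y t : nd G (Eq y te) -> nd G (Eq (tconc s y) t) -> nd G (Eq s t).
Proof.
  intros Hy H. eapply nd_eq_trans; [apply nd_eq_sym, nd_conc_e |].
  eapply nd_eq_trans; [| exact H]. apply nd_cong_conc; [apply ndRefl | now apply nd_eq_sym].
Qed.

Lemma nd_conc_eq_turn s y y1 y2 t :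
  nd G (Eq y (tturn y1 y2)) -> nd G (Eq (tconc s y) t) -> nd G (Eq (tturn (tconc s y1) y2) t).
Proof.
  intros Hy H. eapply nd_eq_trans; [apply nd_eq_sym, nd_conc_turn |].
  eapply nd_eq_trans; [| exact H]. apply nd_cong_conc; [apply ndRefl | now apply nd_eq_sym].
Qed.

End SeqAxioms.

Ltac seq_ctx :=
  repeat lazymatch goal with
    | |- Seq_ctx (_ :: _) => apply Seq_ctx_cons
    | |- Seq_ctx (map shift_f _) => apply Seq_ctx_shift
    end; assumption.

Ltac nd_assumption := apply ndA; cbn [map]; repeat (solve [left; reflexivity] || right).

Ltac shift_simpl :=
  lazymatch goal with |- nd ?G ?phi =>
    let phi' := eval cbn [shift_f subst_form subst_term] in phi in change (nd G phi')
  end; rewrite ?subst_sqsub; fold shift_t.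

Lemma nd_sqsub_e G x : Seq_ctx G -> nd G (sqsub x te) -> nd G (Eq x te).
Proof.
  intros HG H. eapply ndExE; [exact H |].
  apply nd_Seq_cases with (x := var 0); [seq_ctx | |].
  - apply nd_conc_eq_e with (y := var 0); [seq_ctx | nd_assumption ..].
  - set (x3 := shift_t (shift_t (shift_t x))).
    apply ndExp, nd_turn_neq_e with (a := tconc x3 (var 1)) (b := var 0); [seq_ctx |].
    apply nd_conc_eq_turn with (y := var 2); [seq_ctx | nd_assumption ..].
Qed.

Lemma nd_sqsub_turn G x b c : Seq_ctx G ->
  nd G (sqsub x (tturn b c)) -> nd G (Or (Eq x (tturn b c)) (sqsub x b)).
Proof.
  intros HG H. eapply ndExE; [exact H |].
  apply nd_Seq_cases with (x := var 0); [seq_ctx | |]; shift_simpl.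
  - apply ndDI1, nd_conc_eq_e with (y := var 0); [seq_ctx | nd_assumption ..].
  - set (x3 := shift_t (shift_t (shift_t x))); shift_simpl.
    apply ndDI2, nd_sqsub_intro with (u := var 1).
    apply nd_turn_inj with (b := var 0) (d := shift_t (shift_t (shift_t c))); [seq_ctx |].
    apply nd_conc_eq_turn with (y := var 2); [seq_ctx | nd_assumption ..].
Qed.

Lemma nd_conc_numl G la l : Seq_ctx G ->
  nd G (Eq (tconc (numl la) (numl l)) (numl (la ++ l))).
Proof.
  intros HG. induction l as [|c l IH] using rev_ind.
  - rewrite app_nil_r. now apply nd_conc_e.
  - rewrite numl_snoc, app_assoc, numl_snoc.
    eapply nd_eq_trans; [now apply nd_conc_turn |].
    now apply nd_cong_turn; [| apply ndRefl].
Qed.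

Definition num_env (rho : nat -> sq) (n : nat) : term := num (rho n).

Lemma subst_num_env tau rho t :
  subst_term tau (subst_term (num_env rho) t) = subst_term (num_env rho) t.
Proof. rewrite subst_term_comp. apply subst_term_ext. intros n. apply subst_num. Qed.

Lemma nd_eval G rho t : Seq_ctx G ->
  nd G (Eq (subst_term (num_env rho) t) (num (eval rho t))).
Proof.
  intros HG. induction t as [n | | t1 IH1 t2 IH2 | t1 IH1 t2 IH2]; cbn [subst_term eval].
  - apply ndRefl.
  - apply ndRefl.
  - destruct (eval rho t1) as [l1]. change (num (sq_turn _ _)) with (numl (l1 ++ [eval rho t2])).
    rewrite numl_snoc. exact (nd_cong_turn _ _ _ _ _ IH1 IH2).
  - destruct (eval rho t1) as [l1], (eval rho t2) as [l2].
    change (num (sq_conc _ _)) with (numl (l1 ++ l2)).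
    exact (nd_eq_trans _ _ _ _ (nd_cong_conc _ _ _ _ _ IH1 IH2) (nd_conc_numl _ _ _ HG)).
Qed.

Lemma nd_num_neq s : forall s' G, s <> s' -> Seq_ctx G ->
  nd G (Eq (num s) (num s')) -> nd G Fal.
Proof.
  induction s as [l Hl] using sq_nested_ind.
  induction l as [|c l IH] using rev_ind; intros [l'] G Hne HG H;
    change (num (Sq ?x)) with (numl x) in H;
    destruct (snoc_cases l') as [-> | [l0 [c' ->]]]; rewrite ?numl_snoc in H.
  - now contradiction Hne.
  - apply (nd_turn_neq_e _ HG (numl l0) (num c')). now apply nd_eq_sym.
  - exact (nd_turn_neq_e _ HG _ _ H).
  - apply Forall_app in Hl as [Hl Hc]. inversion_clear Hc as [| ? ? Hc' _].
    apply (nd_turn_inj _ HG) in H as [Hhead Hlast].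
    destruct (classic (Sq l = Sq l0)) as [E | E].
    + injection E as ->. apply (Hc' c' G); [congruence | exact HG | exact Hlast].
    + exact (IH Hl (Sq l0) G E HG Hhead).
Qed.

Definition eq_one_of (x : term) (ps : list sq) : form :=
  fold_right (fun p acc => Or (Eq x (num p)) acc) Fal ps.

Lemma nd_eq_one_of_elim ps : forall G x psi, nd G (eq_one_of x ps) ->
  (forall p, In p ps -> nd (Eq x (num p) :: G) psi) -> nd G psi.
Proof.
  induction ps as [|p ps IH]; intros G x psi H Hcase; cbn in H.
  - now apply ndExp.
  - eapply ndDE; [exact H | apply Hcase; left; reflexivity |].
    apply (IH _ x psi (nd_hyp _ _)). intros q Hq.
    apply (nd_weaken _ _ (Hcase q (or_intror Hq))).
    apply incl_cons; [left; reflexivity | apply incl_tl, incl_tl, incl_refl].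
Qed.

Lemma nd_sqsub_num_cases b : exists ps, (forall p, In p ps -> sq_prefix p b) /\
  forall G x, Seq_ctx G -> nd G (sqsub x (num b)) -> nd G (eq_one_of x ps).
Proof.
  destruct b as [l]. fold (numl l).
  induction l as [|c l IH] using rev_ind.
  - exists [Sq []]. split.
    + intros p [<- | []]. now exists (Sq []).
    + intros G x HG H. apply ndDI1. exact (nd_sqsub_e _ _ HG H).
  - destruct IH as [ps [Hps IH]]. exists (Sq (l ++ [c]) :: ps). split.
    + intros p [<- | Hp].
      * exists (Sq []). cbn. now rewrite app_nil_r.
      * destruct (Hps p Hp) as [[ly] Hy], p as [lp]. exists (Sq (ly ++ [c])).
        cbn in *. injection Hy as <-. now rewrite app_assoc.
    + intros G x HG H. rewrite numl_snoc in H.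
      apply (nd_sqsub_turn _ _ _ _ HG) in H.
      cbn [eq_one_of fold_right]. fold (numl (l ++ [c])). rewrite numl_snoc.
      eapply ndDE; [exact H | apply ndDI1, nd_hyp |].
      apply ndDI2, IH; [seq_ctx | apply nd_hyp].
Qed.

Lemma nd_sqsub_num G a b : Seq_ctx G -> sq_prefix a b -> nd G (sqsub (num a) (num b)).
Proof.
  intros HG [[ly] <-]. destruct a as [la].
  apply nd_sqsub_intro with (u := numl ly). exact (nd_conc_numl _ la ly HG).
Qed.

Lemma nd_not_sqsub_num G a b : Seq_ctx G -> ~ sq_prefix a b ->
  nd G (sqsub (num a) (num b)) -> nd G Fal.
Proof.
  intros HG Hab H. destruct (nd_sqsub_num_cases b) as [ps [Hps Hcases]].
  apply (nd_eq_one_of_elim ps _ (num a) _ (Hcases _ _ HG H)).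
  intros p Hp. apply (nd_num_neq a p); [| seq_ctx | apply nd_hyp].
  intros ->. exact (Hab (Hps p Hp)).
Qed.

Lemma num_env_scons x rho n : scons (num x) (num_env rho) n = num_env (scons x rho) n.
Proof. now destruct n. Qed.

Lemma up_num_env rho n : up (num_env rho) n = scons (var 0) (num_env rho) n.
Proof. destruct n; cbn; [reflexivity | apply subst_num]. Qed.

Lemma nd_ball_num_env G rho t phi : Seq_ctx G ->
  (forall p G', sq_prefix p (eval rho t) -> Seq_ctx G' ->
     nd G' (subst_form (num_env (scons p rho)) phi)) ->
  nd G (subst_form (num_env rho) (ball t phi)).
Proof.
  intros HG Hphi. rewrite subst_ball. unfold ball, shift_t at 1. rewrite subst_num_env.
  apply ndAllI, ndII.
  destruct (nd_sqsub_num_cases (eval rho t)) as [ps [Hps Hcases]].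
  apply (nd_eq_one_of_elim ps _ (var 0)).
  - apply Hcases; [seq_ctx |].
    eapply nd_sqsub_transfer; [apply ndRefl | apply nd_eval; seq_ctx | apply nd_hyp].
  - intros p Hp.
    assert (Hvar0 : subst_form (up (num_env rho)) phi
                    = inst (var 0) (subst_form (up (num_env rho)) phi))
      by (rewrite inst_up; apply subst_form_ext, up_num_env).
    rewrite Hvar0. apply ndLeib with (s := num p); [apply nd_eq_sym, nd_hyp |].
    rewrite inst_up, (subst_form_ext _ _ _ (num_env_scons p rho)).
    apply Hphi; [exact (Hps p Hp) | seq_ctx].
Qed.

Lemma nd_Sigma_num_env phi : Sigma phi -> forall rho G, Seq_ctx G -> sat rho phi ->
  nd G (subst_form (num_env rho) phi).
Proof.
  induction 1 as [s t | s t | s t | s t | phi psi _ IH1 _ IH2 | phi psi _ IH1 _ IH2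
                 | phi _ IH | t phi _ IH];
    intros rho G HG Hsat; unfold Neg in *; cbn [subst_form sat] in *; rewrite ?subst_sqsub.
  - eapply nd_eq_trans; [now apply nd_eval |].
    rewrite Hsat. now apply nd_eq_sym, nd_eval.
  - apply ndII, (nd_num_neq (eval rho s) (eval rho t)); [exact Hsat | seq_ctx |].
    eapply nd_eq_trans; [apply nd_eq_sym, nd_eval; seq_ctx |].
    eapply nd_eq_trans; [apply nd_hyp | apply nd_eval; seq_ctx].
  - apply sat_sqsub in Hsat.
    apply (nd_sqsub_transfer _ (num (eval rho s)) _ (num (eval rho t)));
      [now apply nd_eq_sym, nd_eval .. | now apply nd_sqsub_num].
  - rewrite sat_sqsub in Hsat.
    apply ndII, (nd_not_sqsub_num _ (eval rho s) (eval rho t)); [seq_ctx | exact Hsat |].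
    eapply nd_sqsub_transfer; [apply nd_eval; seq_ctx .. | apply nd_hyp].
  - destruct Hsat. apply ndCI; auto.
  - destruct Hsat; [apply ndDI1 | apply ndDI2]; auto.
  - destruct Hsat as [x Hx]. apply ndExI with (t := num x).
    rewrite inst_up, (subst_form_ext _ _ _ (num_env_scons x rho)). now apply IH.
  - apply nd_ball_num_env; [exact HG |]. intros p G' Hp HG'.
    apply IH; [exact HG' |]. apply (Hsat p), sat_sqsub. cbn. now rewrite eval_shift.
Qed.

Theorem corollary1 : forall phi : form,
  Sigma phi -> sentence phi -> S_models phi -> Seq_proves phi.
Proof.
  intros phi HSigma Hsentence Htrue.
  exists [Seq1; Seq2; Seq3; Seq4; Seq5]. split.
  - intros psi [<- | [<- | [<- | [<- | [<- | []]]]]]; red; tauto.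
  - rewrite <- (sentence_subst (num_env (fun _ => sq_e)) phi Hsentence).
    exact (nd_Sigma_num_env phi HSigma _ _ Seq_ctx_axioms (Htrue _)).
Qed.
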